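(* Let $n\ge5$, $x_1,\dots,x_{n-1}>0$, $\gamma,\delta>0$ with $\gamma\ne1\ne\delta$, $x_0=1$, and let $\mathbf{R}$ be the $n\times n$ matrix with entries $r_{ij}=x_{j-1}/x_{i-1}$ except $r_{12}=\delta x_1$, $r_{21}=1/(\delta x_1)$, $r_{34}=\gamma x_3/x_2$, $r_{43}=x_2/(\gamma x_3)$. Let $\mathbf{w}^{EM}$ be its principal right eigenvector. If $\gamma>1$ and $\delta<1$, then $w_2^{EM}/w_4^{EM}>x_3/x_1$; if $\gamma<1$ and $\delta>1$, then $w_2^{EM}/w_4^{EM}<x_3/x_1$.
   Context: The principal right eigenvector is the positive (Perron) eigenvector belonging to the largest eigenvalue. *)

From HB Require Import structures.
From mathcomp Require Import all_boot all_order all_algebra.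
Set Implicit Arguments. Unset Strict Implicit. Unset Printing Implicit Defensive.
Import Order.TTheory GRing.Theory Num.Theory.
Local Open Scope ring_scope.

(* Indices are 0-based: paper index k (1..n) is ordinal k-1.
   x : nat -> R with x 0 = 1 playing x_0, and x k = x_k for 1 <= k <= n-1.
   Paper entry r_{ij} = x_{j-1}/x_{i-1} becomes entry (i,j) (0-based) = x j / x i. *)
Definition EMmat (R : realFieldType) (n : nat) (x : nat -> R) (gamma delta : R)
  : 'M[R]_n :=
  \matrix_(i < n, j < n)
    match nat_of_ord i, nat_of_ord j with
    | 0, 1 => delta * x 1%N
    | 1, 0 => (delta * x 1%N)^-1
    | 2, 3 => gamma * x 3%N / x 2%N
    | 3, 2 => x 2%N / (gamma * x 3%N)
    | _, _ => x (nat_of_ord j) / x (nat_of_ord i)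
    end.

From HB Require Import structures.
From mathcomp Require Import all_boot all_order all_algebra.
From mathcomp Require Import ring lra zify.

Set Implicit Arguments.
Unset Strict Implicit.
Unset Printing Implicit Defensive.
Import Order.TTheory GRing.Theory Num.Theory.
Local Open Scope ring_scope.

(* Put u_j = x_j w_j and S = sum_j u_j.  Multiplying row i of A w = lambda w by
   x_i shows that a row agreeing with the consistent matrix (x_j / x_i) gives
   lambda u_i = S, and a single perturbed entry adds one correction term.  In
   the paper's indexing, row 2 gets (delta^-1 - 1) w_1 and row 4 gets
   (gamma^-1 - 1) u_3, so the signs of 1 - delta and 1 - gamma put lambda u_2
   and lambda u_4 on opposite sides of S. *)

Lemma eigen_row_consistent_but_one (R : fieldType) (n : nat) (A : 'M[R]_n)
    (x : nat -> R) (w : 'cV[R]_n) (lambda : R) (i k : 'I_n) :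
  x i != 0 -> A *m w = lambda *: w ->
  (forall j, j != k -> A i j = x j / x i) ->
  lambda * (x i * w i 0)
    = \sum_(j < n) x j * w j 0 + (A i k * x i - x k) * w k 0.
Proof.
move=> xi_neq0 eigen_w row_i.
have := congr1 (fun B : 'cV[R]_n => B i 0 * x i) eigen_w; rewrite !mxE /=.
rewrite (bigD1 k) //= [\sum_(j < n) x j * w j 0](bigD1 k) //= mulrDl.
rewrite mulr_suml (eq_bigr (fun j : 'I_n => x j * w j 0)) => [E|j /row_i ->].
  by rewrite [LHS]mulrCA [LHS]mulrC -E; ring.
by rewrite mulrAC divfK.
Qed.

Lemma lt_of_eigen_rows (R : realDomainType) (lambda S a b p q : R) :
  0 < a -> 0 < S -> q < 0 < p ->
  lambda * a = S + p -> lambda * b = S + q -> b < a.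
Proof.
move=> a_gt0 S_gt0 /andP[q_lt0 p_gt0] Ea Eb.
have lambda_gt0 : 0 < lambda by rewrite -(pmulr_lgt0 _ a_gt0) Ea; lra.
by rewrite -(ltr_pM2l lambda_gt0) Ea Eb; lra.
Qed.

Section EMmatRows.

Variables (R : realFieldType) (n : nat) (x : nat -> R) (gamma delta : R).
Hypotheses (gamma_neq0 : gamma != 0) (delta_neq0 : delta != 0).

Lemma EMmat_row1 (i j : 'I_n) : val i = 1%N -> val j != 0%N ->
  EMmat n x gamma delta i j = x j / x i.
Proof. by move=> vi; rewrite mxE vi /=; case: (nat_of_ord j). Qed.

Lemma EMmat_row3 (i j : 'I_n) : val i = 3%N -> val j != 2%N ->
  EMmat n x gamma delta i j = x j / x i.
Proof. by move=> vi; rewrite mxE vi /=; case: (nat_of_ord j) => [|[|[|]]]. Qed.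

Variables (lambda : R) (w : 'cV[R]_n).
Hypotheses (x0 : x 0%N = 1) (x1_neq0 : x 1%N != 0) (x3_neq0 : x 3%N != 0).
Hypothesis eigen_w : EMmat n x gamma delta *m w = lambda *: w.

Lemma EMmat_eigen_row1 (i0 i1 : 'I_n) : val i0 = 0%N -> val i1 = 1%N ->
  lambda * (x 1%N * w i1 0)
    = \sum_(j < n) x j * w j 0 + (delta^-1 - 1) * w i0 0.
Proof.
move=> v0 v1; rewrite -[in x 1%N]v1.
have row1 (j : 'I_n) : j != i0 -> EMmat n x gamma delta i1 j = x j / x i1.
  by rewrite -(inj_eq val_inj) v0; exact: EMmat_row1.
rewrite (eigen_row_consistent_but_one _ eigen_w row1) ?v1 //.
by rewrite mxE v0 v1 x0; congr (_ + _ * _); field; rewrite delta_neq0.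
Qed.

Lemma EMmat_eigen_row3 (i2 i3 : 'I_n) : val i2 = 2%N -> val i3 = 3%N ->
  lambda * (x 3%N * w i3 0)
    = \sum_(j < n) x j * w j 0 + (gamma^-1 - 1) * (x 2%N * w i2 0).
Proof.
move=> v2 v3; rewrite -[in x 3%N]v3.
have row3 (j : 'I_n) : j != i2 -> EMmat n x gamma delta i3 j = x j / x i3.
  by rewrite -(inj_eq val_inj) v2; exact: EMmat_row3.
rewrite (eigen_row_consistent_but_one _ eigen_w row3) ?v3 //.
by rewrite mxE v2 v3; congr (_ + _); field; rewrite gamma_neq0.
Qed.

End EMmatRows.

Theorem mainTheorem19 (R : realFieldType) (n : nat) (x : nat -> R)
  (gamma delta lambda : R) (w : 'cV[R]_n)
  (i1 i3 : 'I_n) :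
  (5 <= n)%N ->
  x 0%N = 1 ->
  (forall k, (0 < k < n)%N -> 0 < x k) ->
  0 < gamma -> 0 < delta -> gamma != 1 -> delta != 1 ->
  nat_of_ord i1 = 1%N -> nat_of_ord i3 = 3%N ->
  (forall i, 0 < w i 0) ->
  EMmat n x gamma delta *m w = lambda *: w ->
  (forall mu, eigenvalue (EMmat n x gamma delta) mu -> mu <= lambda) ->
  ((1 < gamma) -> (delta < 1) -> w i1 0 / w i3 0 > x 3%N / x 1%N) /\
  ((gamma < 1) -> (1 < delta) -> w i1 0 / w i3 0 < x 3%N / x 1%N).
Proof.
case: n w i1 i3 => [//|m] w i1 i3 n_ge5 x0 x_gt0 gamma_gt0 delta_gt0 _ _
  v1 v3 w_gt0 eigen_w _.
have x_ord_gt0 (j : 'I_m.+1) : 0 < x j.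
  by case: j => [[|j] lt_j] //=; rewrite ?x0 // x_gt0.
have [x1_gt0 x3_gt0] : 0 < x 1%N /\ 0 < x 3%N by rewrite -v3 -v1.
have v0 : nat_of_ord (inord 0 : 'I_m.+1) = 0%N by rewrite inordK.
have v2 : nat_of_ord (inord 2 : 'I_m.+1) = 2%N by rewrite inordK //; lia.
have S_gt0 : 0 < \sum_(j < m.+1) x j * w j 0.
  rewrite (bigD1 i1) //= ltr_pwDl ?mulr_gt0 // sumr_ge0 // => j _.
  by rewrite ltW ?mulr_gt0.
have E1 := EMmat_eigen_row1 (lt0r_neq0 delta_gt0) x0 (lt0r_neq0 x1_gt0)
  eigen_w v0 v1.
have E3 := EMmat_eigen_row3 (lt0r_neq0 gamma_gt0) (lt0r_neq0 x3_gt0)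
  eigen_w v2 v3.
have w0_gt0 := w_gt0 (inord 0).
have u2_gt0 : 0 < x 2%N * w (inord 2) 0 by rewrite -[in x 2%N]v2 mulr_gt0.
rewrite ltr_pdivrMr // mulrAC ltr_pdivlMr // ltr_pdivlMr // mulrAC ltr_pdivrMr //.
rewrite ![w _ 0 * x _]mulrC.
split=> gamma_cmp delta_cmp.
- apply: (lt_of_eigen_rows _ S_gt0 _ E1 E3); first exact: mulr_gt0.
  rewrite pmulr_llt0 // pmulr_lgt0 // subr_lt0 subr_gt0.
  by rewrite invf_lt1 ?invf_gt1 // gamma_cmp delta_cmp.
- apply: (lt_of_eigen_rows _ S_gt0 _ E3 E1); first exact: mulr_gt0.
  rewrite pmulr_llt0 // pmulr_lgt0 // subr_lt0 subr_gt0.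
  by rewrite invf_lt1 ?invf_gt1 // gamma_cmp delta_cmp.
Qed.
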